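(* Let $F[x,y]$ be a formula of ZF$\varepsilon$ with parameters, and let $G,U\in\Lambda$ satisfy $G\Vdash\forall x\,\neg\forall y\,\neg F[x,y]$ and $U\Vdash\forall f\,\neg\forall n^{\mathbb N}F[f[n],f[n+1]]$. Put $H=\Psi GU$. Let $a_0,\dots,a_k$ be a finite sequence of sets in the ground model $\mathcal M$ and $\phi\in\Lambda$ be such that $\phi\underline i\Vdash F[a_i,a_{i+1}]$ for every $i<k$. If $H\underline k\,\phi\not\Vdash\bot$, then there exist $\zeta\in\Lambda$ and a set $a_{k+1}$ in $\mathcal M$ such that $\zeta\Vdash F[a_k,a_{k+1}]$ and $(H\underline k^+)(\chi)\underline k\,\phi\,\zeta\not\Vdash\bot$, where $\underline k^+=(\sigma)\underline k$.
   Context: Fix an integer $N\ge 0$. The set $\Lambda$ of terms is the smallest set containing the constants $B,C,I,K,W,cc,A$ and $p,q_0,\dots,q_N$, closed under application $(\xi)\eta$ (written $\xi\eta$), and containing, for each sequence $(\xi_i)_{i\in\mathbb N}$ of closed terms (no occurrence of $p,q_0,\dots,q_N$), a constant $\bigwedge_i\xi_i$ (injectively, well-founded). Stacks: finite sequences $t_0\cdot\ldots\cdot t_{n-1}\cdot\pi_0$ of terms, $\pi_0$ the empty stack; $\Pi$ the set of stacks. $\ell_t=((C)(B)CB)t$, $k_{\pi_0}=A$, $k_{t\cdot\pi}=(\ell_t)k_\pi$; $\sigma=(BW)(C)(B)BB$, $\underline0=(K)I$, $\underline{n+1}=(\sigma)\underline n$. Execution $\succ$: least preorder on $\Lambda\times\Pi$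 with $(\xi)\eta\star\pi\succ\xi\star\eta\cdot\pi$; $B\star\xi\cdot\eta\cdot\zeta\cdot\pi\succ\xi\star(\eta)\zeta\cdot\pi$; $C\star\xi\cdot\eta\cdot\zeta\cdot\pi\succ\xi\star\zeta\cdot\eta\cdot\pi$; $I\star\xi\cdot\pi\succ\xi\star\pi$; $K\star\xi\cdot\eta\cdot\pi\succ\xi\star\pi$; $W\star\xi\cdot\eta\cdot\pi\succ\xi\star\eta\cdot\eta\cdot\pi$; $cc\star\xi\cdot\pi\succ\xi\star k_\pi\cdot\pi$; $A\star\xi\cdot\pi\succ\xi\star\pi_0$; $\bigwedge_i\xi_i\star\underline n\cdot\pi\succ\xi_n\star\pi$. Pole $\perp\!\!\!\perp=\{\xi\star\pi:\exists\varpi,\ \xi\star\pi\succ p\star\varpi\}$. $\lambda$-terms are translated into terms by the usual combinatory translation. Let $\mathbf0=\lambda x\lambda y\,y$, $\mathbf1=\lambda x\lambda y\,x$, $\mathsf a=\lambda x\lambda y\,yx$, $(i<k)=((k\mathsf a)\lambda d\,\mathbf0)(i\mathsf a)\lambda d\,\mathbf1$, $\chi=\lambda k\lambda f\lambda z\lambda i((i<k)(f)i)z$, $k^+=(\sigma)k$, $X=\lambda x\lambda f(f)(x)xf$, $Y=XX$, $\Psi=\lambda g\lambda u(Y)\lambda h\lambda k\lambda f(u)(\chi kf)(g)\lambda z(hk^+)(\chi)kfz$. Realizability is Krivine's classical realizability for ZF$\varepsilon$ over the ground model $\mathcal M$ of ZF: $\xi\Vdash F$ iff $\xi\star\pi\in\perp\!\!\!\perp$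 for all $\pi\in\|F\|$; $\|\bot\|=\Pi$, $\|A\to B\|=\{\eta\cdot\pi:\eta\Vdash A,\pi\in\|B\|\}$, $\|\forall xF[x]\|=\bigcup_a\|F[a]\|$, $\neg A$ is $A\to\bot$, $\|\forall n^{\mathbb N}F[n]\|=\{\underline n\cdot\pi:n\in\mathbb N,\pi\in\|F[n]\|\}$; $\xi\not\Vdash F$ means $\xi\Vdash F$ fails. $f[n]=\mathrm{app}(f,n)=\{y:(n,y)\in f\}$. *)

From mathcomp Require Import all_boot.
From Stdlib Require Import Relations.





(* Closed terms (no p, q_i) are the inductive [cterm]; the
   terms of Lambda are [term N].  The constant /\_i xi_i exists for every
   sequence of closed terms; it is (injectively, well-foundedly) a
   constructor.                                                          *)
Inductive cterm : Type :=
| cB | cC | cI | cK | cW | ccc | cA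
| capp of cterm & cterm
| cConj of (nat -> cterm).

Inductive term (N : nat) : Type :=
| tB | tC | tI | tK | tW | tcc | tA
| tp
| tq of 'I_N.+1
| tapp of term N & term N
| tConj of (nat -> cterm).

Arguments tB {N}. Arguments tC {N}. Arguments tI {N}. Arguments tK {N}.
Arguments tW {N}. Arguments tcc {N}. Arguments tA {N}. Arguments tp {N}.

Arguments tq {N}. Arguments tapp {N}.
Fixpoint emb (N : nat) (c : cterm) : term N :=
  match c with
  | cB => tB | cC => tC | cI => tI | cK => tK | cW => tW | ccc => tcc | cA => tA
  | capp u v => tapp (emb N u) (emb N v)
  | cConj xs => tConj N xs
  end.

(* stacks: finite sequences of terms, [::] is pi_0 *)
Definition stack (N : nat) := list (term N).
Arguments emb {N}.

(* l_t = ((C)(B)CB)t = C ((B C) B) t *)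
Definition ell (N : nat) (t : term N) : term N :=
  tapp (tapp tC (tapp (tapp tB tC) tB)) t.

Fixpoint kont (N : nat) (pi : stack N) : term N :=
  match pi with
  | [::] => tA
  | t :: pi' => tapp (ell N t) (kont N pi')
  end.

(* sigma = (BW)(C)(B)BB = (B W) (C ((B B) B)) *)
Definition sigmaT (N : nat) : term N :=
  tapp (tapp tB tW) (tapp tC (tapp (tapp tB tB) tB)).

Arguments ell {N}. Arguments kont {N}.
Fixpoint num (N : nat) (n : nat) : term N :=
  match n with
  | 0 => tapp tK tI
  | n'.+1 => tapp (sigmaT N) (num N n')
  end.

Inductive step (N : nat) : term N * stack N -> term N * stack N -> Prop :=
| st_push xi eta pi : step N (tapp xi eta, pi) (xi, eta :: pi)
| st_B xi eta zeta pi : step N (tB, xi :: eta :: zeta :: pi) (xi, tapp eta zeta :: pi)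
| st_C xi eta zeta pi : step N (tC, xi :: eta :: zeta :: pi) (xi, zeta :: eta :: pi)
| st_I xi pi : step N (tI, xi :: pi) (xi, pi)
| st_K xi eta pi : step N (tK, xi :: eta :: pi) (xi, pi)
| st_W xi eta pi : step N (tW, xi :: eta :: pi) (xi, eta :: eta :: pi)
| st_cc xi pi : step N (tcc, xi :: pi) (xi, kont pi :: pi)
| st_A xi pi : step N (tA, xi :: pi) (xi, [::])
| st_Conj xs n pi : step N (tConj N xs, num N n :: pi) (emb (xs n), pi).

Definition exec (N : nat) := clos_refl_trans (term N * stack N) (@step N).

Definition pole (N : nat) (xi : term N) (pi : stack N) : Prop :=
  exists varpi, exec N (xi, pi) (tp, varpi).

Arguments pole {N}.
Definition fval (N : nat) := stack N -> Prop.

(* xi ||- F  with ||F|| = P *)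
Definition realizes (N : nat) (xi : term N) (P : fval N) : Prop :=
  forall pi, P pi -> pole xi pi.

Arguments realizes {N}.
Definition fbot (N : nat) : fval N := fun _ => True.

Definition fimp (N : nat) (PA PB : fval N) : fval N :=
  fun s => exists eta pi, s = eta :: pi /\ realizes eta PA /\ PB pi.

Arguments fimp {N}.
Definition fneg (N : nat) (PA : fval N) : fval N := fimp PA (fbot N).
Arguments fneg {N}.

(* ||forall x F[x]|| = union over sets a of the ground model *)
Definition fall (N : nat) (V : Type) (P : V -> fval N) : fval N :=
  fun s => exists a, P a s.

Arguments fall {N V}.
Definition fallN (N : nat) (P : nat -> fval N) : fval N :=
  fun s => exists n pi, s = num N n :: pi /\ P n pi.

Arguments fallN {N}.
Inductive lam (N : nat) : Type :=
| LV of nat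
| LC of term N
| LA of lam N & lam N
| LL of nat & lam N.

Arguments LV {N}.

Inductive cexp (N : nat) : Type :=
| EV of nat
| EC of term N
| EA of cexp N & cexp N.

Arguments EV {N}. Arguments EC {N}. Arguments EA {N}. Arguments LC {N}. Arguments LA {N}. Arguments LL {N}.

Fixpoint occurs (N : nat) (x : nat) (e : cexp N) : bool :=
  match e with
  | EV y => y == x
  | EC _ => false
  | EA u v => occurs N x u || occurs N x v
  end.

Arguments occurs {N}.
Definition is_var (N : nat) (x : nat) (e : cexp N) : bool :=
  if e is EV y then y == x else false.

Arguments is_var {N}.
Fixpoint abs (N : nat) (x : nat) (e : cexp N) : cexp N :=
  if ~~ occurs x e then EA (EC tK) e else
  match e with
  | EV _ => EC tI
  | EC c => EA (EC tK) (EC c)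
  | EA t u =>
      if ~~ occurs x u then EA (EA (EC tC) (abs N x t)) u
      else if is_var x u && ~~ occurs x t then t
      else if ~~ occurs x t then EA (EA (EC tB) t) (abs N x u)
      else EA (EC tW) (EA (EA (EC tB) (EA (EA (EC tC) (EC tB)) (abs N x u))) (abs N x t))
  end.

Arguments abs {N}.
Fixpoint compile (N : nat) (l : lam N) : cexp N :=
  match l with
  | LV x => EV x
  | LC t => EC t
  | LA u v => EA (compile N u) (compile N v)
  | LL x u => abs x (compile N u)
  end.

(* closed combinatory expressions to terms (variables never occur for the
   closed lambda-terms used below; they are sent to I arbitrarily) *)
Arguments compile {N}.
Fixpoint cexp_term (N : nat) (e : cexp N) : term N :=
  match e with
  | EV _ => tI
  | EC t => t
  | EA u v => tapp (cexp_term N u) (cexp_term N v)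
  end.

Arguments cexp_term {N}.
Definition tr (N : nat) (l : lam N) : term N := cexp_term (compile l).

Arguments tr {N}.
Definition zeroT (N : nat) : term N := tr (LL 0 (LL 1 (LV 1))).
Definition oneT (N : nat) : term N := tr (LL 0 (LL 1 (LV 0))).
Definition aT (N : nat) : term N := tr (LL 0 (LL 1 (LA (LV 1) (LV 0)))).

Definition ltL (N : nat) (i k : lam N) : lam N :=
  LA (LA (LA k (LC (aT N))) (LL 100 (LC (zeroT N))))
     (LA (LA i (LC (aT N))) (LL 100 (LC (oneT N)))).

Arguments ltL {N}.
Definition chiT (N : nat) : term N :=
  tr (LL 0 (LL 1 (LL 2 (LL 3
        (LA (LA (ltL (LV 3) (LV 0)) (LA (LV 1) (LV 3))) (LV 2)))))).

Definition XT (N : nat) : term N :=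
  tr (LL 0 (LL 1 (LA (LV 1) (LA (LA (LV 0) (LV 0)) (LV 1))))).
Definition YT (N : nat) : term N := tapp (XT N) (XT N).

Definition PsiT (N : nat) : term N :=
  let g := LV 0 in let u := LV 1 in let h := LV 2 in
  let k := LV 3 in let f := LV 4 in let z := LV 5 in
  tr (LL 0 (LL 1 (LA (LC (YT N))
       (LL 2 (LL 3 (LL 4
          (LA u (LA (LA (LA (LC (chiT N)) k) f)
                    (LA g (LL 5 (LA (LA h (LA (LC (sigmaT N)) k))
                                    (LA (LA (LA (LC (chiT N)) k) f) z)))))))))))).

(* Write h for the fixed point Y xi of the body xi of Psi, so that
   H k phi runs as U applied to M = chi k phi (G L), where
   L = \z (h k+) (chi k phi z).  Let f be a set with f[n] = a_(min n k).
   Then M realizes forall n F[f[n], f[n+1]]: below k it runs phi, from k on it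
   passes L to G.  Since U realizes the negation, H k phi ||- bot as soon as
   L realizes forall y ~F[a_k, y]; otherwise some zeta ||- F[a_k, b] sends
   L zeta, which runs as H k+ (chi k phi zeta), out of the pole.
   The compiled Y does not reproduce itself syntactically, so the argument also
   needs that the pole cannot tell apart two unfoldings of the fixed point; this
   is a simulation argument resting on the determinism of execution. *)

From mathcomp Require Import all_boot.
From Stdlib Require Import Relations Classical.
From Stdlib Require List.

Section Execution.
Context {N : nat}.
Implicit Types (x y : term N) (p q : stack N) (s : term N * stack N).

Lemma exec_step_l {s s' s''} : step N s s' -> exec N s' s'' -> exec N s s''.
Proof. by move=> Hs; apply: rt_trans (rt_step _ _ _ _ Hs). Qed.

Lemma num_inj : injective (num N).
Proof. by elim=> [|n IH] [|m] //= [/IH ->]. Qed.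

Lemma step_det {s s1 s2} : step N s s1 -> step N s s2 -> s1 = s2.
Proof.
move=> H1; inversion H1; subst => H2; inversion H2; subst => //.
by match goal with E : num _ _ = num _ _ |- _ => move/num_inj: E => -> end.
Qed.

Inductive execn : nat -> term N * stack N -> term N * stack N -> Prop :=
| execn0 s : execn 0 s s
| execnS n s s' s'' : step N s s' -> execn n s' s'' -> execn n.+1 s s''.

Lemma execn0_eq {s s'} : execn 0 s s' -> s = s'.
Proof. by inversion 1. Qed.

Lemma execn_cat {n m s s' s''} : execn n s s' -> execn m s' s'' -> execn (n + m) s s''.
Proof. by elim=> // {}n {}s s1 s2 Hs _ IH /IH; apply: execnS. Qed.

Lemma execn_exec {n s s'} : execn n s s' -> exec N s s'.
Proof. by elim=> [|{}n {}s s1 s2 Hs _]; [apply: rt_refl | apply: exec_step_l]. Qed.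

Lemma exec_execn {s s'} : exec N s s' -> exists n, execn n s s'.
Proof.
elim=> [s1 s2 Hs | s1 | s1 s2 s3 _ [n Hn] _ [m Hm]].
- by exists 1; apply: execnS Hs (execn0 _).
- by exists 0; apply: execn0.
- by exists (n + m); apply: execn_cat Hm.
Qed.

(* Execution is deterministic and [tp] cannot step. *)
Lemma execn_prefix {j n s s' w} : execn j s s' -> execn n s (tp, w) ->
  j <= n /\ execn (n - j) s' (tp, w).
Proof.
move=> Hj; elim: Hj n => [s0 n Hn | {}j s0 s1 s2 Hs _ IH [|n] Hn].
- by rewrite subn0.
- by inversion Hn; subst; inversion Hs.
- inversion Hn as [|n' s3 s4 s5 Hs' Hn']; subst.
  by rewrite (step_det Hs Hs') in IH; case: (IH _ Hn').
Qed.

Lemma pole_antiexec {x p y q} : exec N (x, p) (y, q) -> pole y q -> pole x p.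
Proof. by move=> Hxy [w Hw]; exists w; apply: rt_trans Hw. Qed.

Lemma pole_exec {x p y q} : exec N (x, p) (y, q) -> pole x p -> pole y q.
Proof.
move=> /exec_execn [j Hj] [w /exec_execn [n Hn]].
by exists w; case: (execn_prefix Hj Hn) => _ /execn_exec.
Qed.

End Execution.

Ltac run := repeat (first [apply rt_refl | eapply exec_step_l; [constructor|]]).

Section Combinators.
Context {N : nat}.
Implicit Types (x y z f : term N) (p q : stack N).

(* [i < k] is decided by letting [k a (λd 0)] and [i a (λd 1)] strip one [a]
   from each other until one of them is exhausted; [T] is [(i a) λd 1]. *)
Lemma num_compare k i T y z p :
  (forall x q, exec N (T, x :: q) (num N i, aT N :: tapp tK (oneT N) :: x :: q)) ->
  exec N (num N k, aT N :: tapp tK (zeroT N) :: T :: y :: z :: p)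
         (if i < k then (y, p) else (z, p)).
Proof.
rewrite /aT /zeroT /oneT /tr /=.
elim: k i T y z p => [|k IH] i T y z p HT /=.
- by run.
- run; apply: rt_trans (HT _ _) _.
  case: i HT => [|i] HT /=; run.
  by rewrite ltnS; apply: IH => x q; run.
Qed.

Lemma chiT_num k f z i p :
  exec N (chiT N, num N k :: f :: z :: num N i :: p)
         (if i < k then (f, num N i :: p) else (z, p)).
Proof.
rewrite /chiT {1}/tr /=; run.
apply: rt_trans; first by apply: num_compare => x q; run.
by case: ifP => _; run.
Qed.

End Combinators.

Section FixedPoint.
Context {N : nat}.
Implicit Types (t xi : term N) (p : stack N).

(* The compiled [X] turns [x x f] into [W P x f] with [P = B (C B I) I], and
   [P x x] runs as [x (I x)]: each unfolding of [Y xi] puts one more [I] in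
   front of [X], and [fixT xi m] is the fixed point after [m] unfoldings. *)
Definition fixT xi (m : nat) : term N :=
  tapp (tapp (tapp tW (tapp (tapp tB (tapp (tapp tC tB) tI)) tI))
             (iter m (tapp tI) (XT N))) xi.

Lemma iterI_exec m t p : exec N (iter m (tapp tI) t, p) (t, p).
Proof. by elim: m p => [|m IH] p /=; run. Qed.

Lemma fixT_unfold xi m p : exec N (fixT xi m, p) (xi, fixT xi m.+1 :: p).
Proof.
rewrite /fixT; run; apply: rt_trans (iterI_exec _ _ _) _.
by rewrite {1}/XT /tr /=; run.
Qed.

Lemma YT_unfold xi p : exec N (YT N, xi :: p) (xi, fixT xi 0 :: p).
Proof. by apply: exec_step_l (st_push _ _ _ _) _; rewrite {1}/XT /tr /=; run. Qed.

End FixedPoint.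

Section PsiUnfolding.
Context {N : nat}.

(* [xi] is the compiled body [\h\k\f ...] of [Psi G U];
   [M h k f] is [(chi k f)(G L)] and [L h k f] is [\z (h k+)(chi k f z)]. *)
Lemma PsiT_spec (G U : term N) : exists xi M L : term N,
  [/\ forall kap f p, exec N (tapp (tapp (tapp (tapp (PsiT N) G) U) kap) f, p)
                             (YT N, xi :: kap :: f :: p),
      forall h kap f p, exec N (xi, h :: kap :: f :: p)
                               (U, tapp (tapp (tapp M h) kap) f :: p),
      forall h k f i p, exec N (tapp (tapp (tapp M h) (num N k)) f, num N i :: p)
          (if i < k then (f, num N i :: p)
           else (G, tapp (tapp (tapp L h) (num N k)) f :: p))
    & forall h kap f z p, exec N (tapp (tapp (tapp L h) kap) f, z :: p)
          (h, tapp (sigmaT N) kap :: tapp (tapp (tapp (chiT N) kap) f) z :: p)].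
Proof.
do 3 eexists; split.
- by move=> kap f p; rewrite /PsiT {1}/tr /=; run.
- by move=> h kap f p; run.
- move=> h k f i p; with_strategy opaque [chiT] run.
  apply: rt_trans (chiT_num _ _ _ _ _) _.
  by case: ifP => _; run.
- by move=> h kap f z p; run.
Qed.
End PsiUnfolding.

Section HeadSimulation.
Context {N : nat} (R : term N -> term N -> Prop).

Inductive sim : term N -> term N -> Prop :=
| sim_base t t' : R t t' -> sim t t'
| sim_app u u' v v' : sim u u' -> sim v v' -> sim (tapp u v) (tapp u' v')
| sim_refl t : sim t t.

Definition sim_state (s s' : term N * stack N) : Prop :=
  sim s.1 s'.1 /\ List.Forall2 sim s.2 s'.2.

Fixpoint R_free (t : term N) : Prop :=
  (forall t', ~ R t t') /\ (if t is tapp u v then R_free u /\ R_free v else True).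

(* [tConj] inspects its numeral argument syntactically. *)
Hypothesis num_R_free : forall n, R_free (num N n).
(* [0 < j] makes the induction on the length of executions go through. *)
Hypothesis R_sim : forall t t' st st', R t t' -> List.Forall2 sim st st' ->
  exists j s s', [/\ 0 < j, execn j (t, st) s, exec N (t', st') s' & sim_state s s'].

Lemma R_free_head t t' : R_free t -> ~ R t t'.
Proof. by case: t => [||||||||i|u v|xs] []. Qed.

Lemma sim_R_free {t t'} : sim t t' -> R_free t -> t' = t.
Proof.
elim=> [{}t {}t' HR /R_free_head /(_ HR) [] | u u' v v' _ IHu _ IHv | //].
by move=> /= [_ [/IHu -> /IHv ->]].
Qed.

Lemma sim_kont st st' : List.Forall2 sim st st' -> sim (kont st) (kont st').
Proof.
elim=> [|x y {}st {}st' Hxy _ IH] /=; first exact: sim_refl.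
by apply: sim_app IH; apply: sim_app Hxy; apply: sim_refl.
Qed.

Lemma step_sim_stack {t st st' s} :
  step N (t, st) s -> List.Forall2 sim st st' ->
  exists s', step N (t, st') s' /\ sim_state s s'.
Proof.
move=> Hs Hst; inversion Hs; subst;
  repeat match goal with H : List.Forall2 _ (_ :: _) _ |- _ => inversion H; subst; clear H end.
all: try match goal with H : sim (num N _) _ |- _ => rewrite (sim_R_free H (num_R_free _)) end.
all: eexists; split; first constructor.
all: split => /=; repeat first [ assumption | apply: sim_refl | apply: sim_app
  | apply: sim_kont | apply: List.Forall2_cons | apply: List.Forall2_nil ].
Qed.

Lemma sim_stack_refl st : List.Forall2 sim st st.
Proof. by elim: st => [|t st IH]; constructor => //; apply: sim_refl. Qed.

Lemma execn_pole_sim {n s s' w} :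
  execn n s (tp, w) -> sim_state s s' -> pole s'.1 s'.2.
Proof.
elim/ltn_ind: n s s' => n IH [t st] [t' st'] Hn [/= Hsim].
move: Hn; case: t t' / Hsim => [t t' HR | u u' v v' Hu Hv | t] Hn Hst.
- have [j [s1 [[u' st2'] [j_gt0 Hj Hj' Hs1]]]] := R_sim _ _ _ _ HR Hst.
  have [le_jn Hrest] := execn_prefix Hj Hn.
  apply: pole_antiexec Hj' (IH (n - j) _ s1 (u', st2') Hrest Hs1).
  by rewrite ltn_subrL j_gt0 (leq_trans j_gt0 le_jn).
- have [n_gt0 Hrest] := execn_prefix (execnS _ _ _ _ (st_push _ _ _ _) (execn0 _)) Hn.
  apply: pole_antiexec (rt_step _ _ _ _ (st_push _ u' v' st')) _.
  apply: (IH (n - 1) _ _ (u', v' :: st') Hrest); first by rewrite ltn_subrL.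
  by split => //=; constructor.
- case: n IH Hn => [|n] IH Hn.
  + by inversion Hn; exists st'; apply: rt_refl.
  + inversion Hn as [|n' s0 s1 s2 Hs Hrest]; subst.
    have [[u' st2'] [Hs' Hs1]] := step_sim_stack Hs Hst.
    apply: pole_antiexec (rt_step _ _ _ _ Hs') _.
    exact: (IH n _ _ (u', st2') Hrest Hs1).
Qed.

Lemma pole_sim t st t' st' :
  pole t st -> sim t t' -> List.Forall2 sim st st' -> pole t' st'.
Proof.
move=> [w /exec_execn [n Hn]] Hsim Hst.
exact: (execn_pole_sim (s' := (t', st')) Hn (conj Hsim Hst)).
Qed.

End HeadSimulation.

Section FixIndex.
Context {N : nat} (xi : term N).

Definition same_fixT (t t' : term N) : Prop :=
  exists m m', t = fixT xi m /\ t' = fixT xi m'.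

Lemma num_free_fixT n : R_free same_fixT (num N n).
Proof.
elim: n => [|n IH]; rewrite /= ?/sigmaT /=;
  repeat split => //; move=> t' [m [m' [E _]]]; rewrite /fixT in E; discriminate E.
Qed.

Lemma same_fixT_sim t t' st st' : same_fixT t t' -> List.Forall2 (sim same_fixT) st st' ->
  exists j s s', [/\ 0 < j, execn j (t, st) s, exec N (t', st') s'
                   & sim_state same_fixT s s'].
Proof.
move=> [m [m' [-> ->]]] Hst.
have [[|j] Hj] := exec_execn (fixT_unfold xi m st).
  by case: (execn0_eq Hj) => _ /(congr1 size) /n_Sn.
exists j.+1, (xi, fixT xi m.+1 :: st), (xi, fixT xi m'.+1 :: st').
split => //; first exact: fixT_unfold.
split => /=; first exact: sim_refl.
by constructor => //; apply: sim_base; exists m.+1, m'.+1.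
Qed.

Lemma pole_fixT_index {t m m' st} :
  pole t (fixT xi m :: st) -> pole t (fixT xi m' :: st).
Proof.
move=> Hpole; apply: (pole_sim _ num_free_fixT same_fixT_sim _ _ _ _ Hpole (sim_refl _ _)).
by constructor; [apply: sim_base; exists m, m' | apply: sim_stack_refl].
Qed.

End FixIndex.

Theorem lemma6 (N : nat) (V : Type) (app : V -> nat -> V)
  (hM : forall (s : nat -> V) (k : nat), exists f : V, forall n, app f n = s (minn n k))
  (FF : V -> V -> fval N) (G U : term N)
  (hG : realizes G (fall (fun x => fneg (fall (fun y => fneg (FF x y))))))
  (hU : realizes U (fall (fun f : V =>
          fneg (fallN (fun n => FF (app f n) (app f n.+1))))))
  (k : nat) (a : nat -> V) (phi : term N)
  (hphi : forall i, i < k -> realizes (tapp phi (num N i)) (FF (a i) (a i.+1))) :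
  let H := tapp (tapp (PsiT N) G) U in
  ~ realizes (tapp (tapp H (num N k)) phi) (fbot N) ->
  exists (zeta : term N) (b : V),
    realizes zeta (FF (a k) b) /\
    ~ realizes (tapp (tapp H (tapp (sigmaT N) (num N k)))
                     (tapp (tapp (tapp (chiT N) (num N k)) phi) zeta)) (fbot N).
Proof.
move=> H H_not; apply: NNPP => no_zeta; apply: H_not => p0 _.
have H_next zeta b : realizes zeta (FF (a k) b) ->
    realizes (tapp (tapp H (num N k.+1))
                   (tapp (tapp (tapp (chiT N) (num N k)) phi) zeta)) (fbot N).
  by move=> Hzeta; apply: NNPP => H_npole; apply: no_zeta; exists zeta, b.
have [xi [M [L [H_Y xi_U M_chi L_h]]]] := PsiT_spec G U.
have H_xi kap f p : exec N (tapp (tapp H kap) f, p) (xi, fixT xi 0 :: kap :: f :: p).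
  exact: rt_trans (H_Y _ _ _) (YT_unfold _ _).
pose Lk := tapp (tapp (tapp L (fixT xi 0)) (num N k)) phi.
have Lk_realizes : realizes Lk (fall (fun b => fneg (FF (a k) b))).
{ move=> _ [b [zeta [p [-> [/H_next /(_ p I) H_pole _]]]]].
  apply: pole_antiexec (L_h _ _ _ _ _) _; apply: (pole_antiexec (fixT_unfold xi 0 _)).
  move: (pole_exec (H_xi _ _ _) H_pole); exact: pole_fixT_index. }
have [f Hf] := hM a k.
pose Mk := tapp (tapp (tapp M (fixT xi 0)) (num N k)) phi.
have Mk_realizes : realizes Mk (fallN (fun n => FF (app f n) (app f n.+1))).
{ move=> _ [i [p [-> Hp]]].
  case: ltnP (M_chi (fixT xi 0) k phi i p) => [lt_ik | le_ki] /pole_antiexec; apply.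
  - rewrite !Hf (minn_idPl (ltnW lt_ik)) (minn_idPl lt_ik) in Hp.
    exact: pole_exec (rt_step _ _ _ _ (st_push _ _ _ _)) (hphi _ lt_ik _ Hp).
  - by apply: hG; exists (a k), Lk, p. }
apply: pole_antiexec (H_xi _ _ _) _; apply: pole_antiexec (xi_U _ _ _ _) _.
by apply: hU; exists f, Mk, p0.
Qed.
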